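(* Let $T[1..n]$ be a text and $\tau\ge1$ an integer. Suppose the first $i-1$ factors of the LZ-End+$\tau$ factorization of $T$ have been determined and the next factor starts at position $s_i$. If the $\tau$-far property holds for an index $j>s_i$, then it holds for $j-1$.
   Context: LZ-End+$\tau$ factorization: processed left to right starting with $i=1$. If $T[i]$ does not occur in $T[1..i-1]$, make $T[i]$ a new factor and set $i\gets i+1$. Otherwise, let $j$ be the largest index such that $T[i..j]$ has an earlier occurrence $T[k-(j-i)..k]=T[i..j]$ with $k<i$ where either $k$ is the last position of an earlier factor or $k-1\equiv 0\pmod\tau$; make $T[i..j]$ the next factor and set $i\gets j+1$. Potential factor: $T[s_i..h]$ is a potential factor if either $h=s_i$ and $T[s_i]$ is the leftmost occurrence of its symbol in $T$, or $T[s_i..h]=T[x..y]$ for some $x\le y<s_i$ such that $y$ is the last position of one of the already determined factors or $y-1\equiv 0\pmod\tau$. $\tau$-far property: it holds for an index $j\ge s_i$ if there exists $h$ with $s_i\le h$ and $j-\tau\le h\le j$ such that $T[s_i..h]$ is a potential factor. *)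

(* Texts are sequences over an eqType alphabet;
   positions are 1-indexed as in the paper: T[p] = nth _ T (p-1). *)
From mathcomp Require Import all_boot.
Set Implicit Arguments. Unset Strict Implicit. Unset Printing Implicit Defensive.

Section LZEnd.
Variable A : eqType.

(* T[a..b] (1-indexed, inclusive) *)
Definition tsub (T : seq A) (a b : nat) : seq A := take (b.+1 - a) (drop a.-1 T).

Definition fresh_at (T : seq A) (p : nat) : bool :=
  ~~ has (fun q => tsub T q q == tsub T p p) (iota 1 p.-1).

(* k is an admissible source end: last position of an already determined
   factor (k \in E) or k-1 = 0 mod tau *)
Definition src_end (tau : nat) (E : seq nat) (k : nat) : bool :=
  (k \in E) || (k.-1 %% tau == 0).

Definition ext_ok (T : seq A) (tau : nat) (E : seq nat) (i j : nat) : bool :=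
  has (fun k => [&& j - i < k, src_end tau E k & tsub T (k - (j - i)) k == tsub T i j])
      (iota 1 i.-1).

Definition fend (T : seq A) (tau : nat) (E : seq nat) (i : nat) : nat :=
  if fresh_at T i then i
  else last i (filter (ext_ok T tau E i) (iota i ((size T).+1 - i))).

Fixpoint lzends (T : seq A) (tau fuel : nat) (E : seq nat) (i : nat) : seq nat :=
  if fuel is f.+1 then
    if i <= size T then
      let j := fend T tau E i in j :: lzends T tau f (rcons E j) j.+1
    else [::]
  else [::].

(* LZ-End+tau factorization of T, given as the list of factor end positions *)
Definition lzend_tau (T : seq A) (tau : nat) : seq nat :=
  lzends T tau (size T) [::] 1.

Definition potential_factor (T : seq A) (tau : nat) (E : seq nat) (s h : nat) : Prop :=
  h <= size T /\
  ((h = s /\ fresh_at T s) \/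
   exists x y, [/\ 1 <= x, x <= y, y < s, tsub T s h = tsub T x y & src_end tau E y]).

Definition tau_far (T : seq A) (tau : nat) (E : seq nat) (s j : nat) : Prop :=
  exists h, [/\ s <= h, j - tau <= h, h <= j & potential_factor T tau E s h].

End LZEnd.

(* Let T[s..h] witness the tau-far property of j.  If h < j it also witnesses
   it for j - 1, so let h = j and T[s..j] = T[x..y] with y admissible.  If
   j - s >= tau, one of the tau positions y - tau + 1, ..., y is congruent to 1
   mod tau, and cutting the copy there gives a potential factor ending in
   [j - tau, j - 1].  Otherwise the window of j - 1 contains s, and T[s..s] is
   a potential factor: either T[s] is fresh, or the leftmost occurrence m of
   its symbol is.  A fresh symbol always forms a factor by itself, since a
   longer factor is copied from earlier text; so m < s ends a factor that is
   already determined. *)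

From mathcomp Require Import all_boot.
From mathcomp Require Import zify.

Set Implicit Arguments.
Unset Strict Implicit.
Unset Printing Implicit Defensive.

Lemma exists_aligned_below (tau y : nat) : 0 < tau -> 1 < y ->
  exists y', [/\ y - tau <= y', y' < y & y'.-1 %% tau == 0].
Proof.
move=> htau hy; exists (y.-1 - (y - 2) %% tau).
have hr : (y - 2) %% tau < tau by rewrite ltn_mod.
have -> : (y.-1 - (y - 2) %% tau).-1 = (y - 2) %/ tau * tau.
  move: hr (divn_eq (y - 2) tau).
  by move: ((y - 2) %/ tau * tau) ((y - 2) %% tau) => qt r; lia.
by rewrite modnMl; split => //; lia.
Qed.

Section Substrings.
Variable A : eqType.
Implicit Types T : seq A.

Lemma take_tsub T a b c : c <= b -> take (c.+1 - a) (tsub T a b) = tsub T a c.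
Proof. by move=> hcb; rewrite /tsub take_takel //; lia. Qed.

Lemma drop_tsub T a c t : 0 < a -> a + t <= c.+1 ->
  drop t (tsub T a c) = tsub T (a + t) c.
Proof.
move=> ha hac; rewrite /tsub.
have -> : (a + t).-1 = t + a.-1 by lia.
rewrite -drop_drop [RHS]take_drop; congr (drop _ (take _ _)); lia.
Qed.

Lemma size_tsub T a b : 0 < a -> b <= size T -> size (tsub T a b) = b.+1 - a.
Proof. by move=> ha hb; rewrite /tsub size_take_min size_drop; lia. Qed.

Lemma tsub_prefix_eq T x y s h t : tsub T x y = tsub T s h ->
  x + t <= y -> s + t <= h -> tsub T x (x + t) = tsub T s (s + t).
Proof.
move=> eq_occ hxy hsh.
rewrite -(take_tsub T x hxy) -(take_tsub T s hsh) eq_occ.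
by have -> : (x + t).+1 - x = (s + t).+1 - s by lia.
Qed.

Lemma tsub_point_eq T x y s h t : 0 < x -> 0 < s -> tsub T x y = tsub T s h ->
  x + t <= y -> s + t <= h -> tsub T (x + t) (x + t) = tsub T (s + t) (s + t).
Proof.
move=> hx hs eq_occ hxy hsh.
rewrite -drop_tsub // -[in RHS]drop_tsub //.
by rewrite (tsub_prefix_eq eq_occ hxy hsh).
Qed.

Lemma freshPn T p :
  reflect (exists2 q, 0 < q < p & tsub T q q = tsub T p p) (~~ fresh_at T p).
Proof.
rewrite /fresh_at negbK; apply: (iffP hasP) => [[q]|[q hq]].
  by rewrite mem_iota => hq /eqP eq_q; exists q => //; lia.
by move=> eq_q; exists q; [rewrite mem_iota; lia | apply/eqP].
Qed.

Lemma exists_fresh_occurrence T p : 0 < p ->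
  exists m, [/\ 0 < m <= p, fresh_at T m & tsub T m m = tsub T p p].
Proof.
move=> hp.
have ex_occ : exists q, (0 < q) && (tsub T q q == tsub T p p).
  by exists p; rewrite hp eqxx.
case: (ex_minnP ex_occ) => m /andP [hm /eqP eq_m] m_min.
exists m; split => //; first by rewrite hm /= m_min // hp eqxx.
apply/freshPn => -[q /andP [hq hqm] eq_q].
by have := m_min q; rewrite hq eq_q eq_m eqxx => /(_ isT); lia.
Qed.

End Substrings.

Section FreshSymbols.
Variables (A : eqType) (T : seq A) (tau : nat).

Lemma fresh_eq_fend E i p : 0 < i -> i <= p <= fend T tau E i ->
  fresh_at T p -> p = fend T tau E i.
Proof.
move=> hi /andP [hip]; rewrite /fend; case: ifP => fresh_i; first by lia.
set j := last _ _ => hpj fresh_p.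
have [ep|nep] := eqVneq p i; first by move: fresh_i; rewrite -ep fresh_p.
have : j \in i :: filter (ext_ok T tau E i) (iota i ((size T).+1 - i)).
  exact: mem_last.
rewrite in_cons => /orP [/eqP ej|]; first lia.
rewrite mem_filter => /andP [/hasP [k hk /and3P [hjk _ /eqP eq_occ]] _].
move: hk; rewrite mem_iota => hk.
suff : ~~ fresh_at T p by rewrite fresh_p.
apply/freshPn; exists (k - (j - i) + (p - i)); first lia.
by rewrite -[in RHS](subnKC hip); apply: tsub_point_eq _ _ eq_occ _ _; lia.
Qed.

Lemma fresh_mem_lzends fuel E i k p : 0 < i -> i <= p ->
  p <= last i.-1 (take k (lzends T tau fuel E i)) -> fresh_at T p ->
  p \in take k (lzends T tau fuel E i).
Proof.
elim: fuel E i k => [|fuel IH] E i k hi hip /=; first lia.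
case: ifP => _; last by case: k => [|k] /=; lia.
case: k => [|k] /=; first lia.
move=> hp fresh_p; rewrite in_cons.
have [hpj|hjp] := leqP p (fend T tau E i).
  by rewrite -(fresh_eq_fend hi _ fresh_p) ?eqxx ?hip.
by rewrite IH ?orbT.
Qed.

Lemma fresh_mem_lzend_tau k p : 0 < p ->
  p <= last 0 (take k (lzend_tau T tau)) -> fresh_at T p -> p \in take k (lzend_tau T tau).
Proof. exact: fresh_mem_lzends. Qed.

End FreshSymbols.

Section PotentialFactors.
Variables (A : eqType) (T : seq A) (tau : nat) (E : seq nat) (s : nat).

Lemma potential_factor_single : 0 < s <= size T ->
  (forall p, 0 < p < s -> fresh_at T p -> p \in E) ->
  potential_factor T tau E s s.
Proof.
move=> /andP [hs hsT] fresh_in_E; split => //.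
have [fresh_s|/freshPn [q /andP [hq hqs] eq_q]] := boolP (fresh_at T s).
  by left.
right; have [m [/andP [hm hmq] fresh_m eq_m]] := exists_fresh_occurrence T hq.
exists m, m; split; rewrite ?eq_m ?eq_q //; first lia.
by rewrite /src_end fresh_in_E //; lia.
Qed.

Lemma potential_factor_shorten h : 0 < tau -> s + tau <= h ->
  potential_factor T tau E s h ->
  exists h', [/\ h - tau <= h', h' < h & potential_factor T tau E s h'].
Proof.
move=> htau hsh [hhT [[ehs _]|[x [y [hx hxy hys eq_occ _]]]]]; first lia.
have hlen : y - x = h - s.
  by have := congr1 size eq_occ; rewrite !size_tsub; lia.
have hy : 1 < y by lia.
have [y' [hy'1 hy'2 aligned]] := exists_aligned_below htau hy.
exists (s + (y' - x)); split; [lia | lia | split; first lia].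
right; exists x, y'; split; rewrite /src_end ?aligned ?orbT //; try lia.
have hxy' : x <= y' by lia.
rewrite -[in RHS](subnKC hxy').
by apply: (tsub_prefix_eq (t := y' - x) eq_occ); lia.
Qed.

End PotentialFactors.

Theorem lemma4 (A : eqType) (T : seq A) (tau : nat) (htau : 1 <= tau)
  (i : nat) (hi : 1 <= i <= size (lzend_tau T tau)) (j : nat) :
  let E := take i.-1 (lzend_tau T tau) in
  let s := (last 0 E).+1 in
  s < j -> tau_far T tau E s j -> tau_far T tau E s j.-1.
Proof.
move=> E s hsj [h [hsh hjh hhj pf_h]].
have [hlt|hge] := ltnP h j; first by exists h; split => //; lia.
have ehj : h = j by lia.
subst h.
have [long|short] := leqP (s + tau) j.
  have [h' [hh'1 hh'2 pf_h']] := potential_factor_shorten htau long pf_h.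
  by exists h'; split => //; lia.
exists s; split => //; try lia.
apply: potential_factor_single; first by case: pf_h; lia.
by move=> p /andP [hp hps]; apply: fresh_mem_lzend_tau.
Qed.
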